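(* Let $u=u(t,x)$ be a smooth function on $[0,T)\times S^1$ and let $\eta$ be its flow, i.e. $\eta:[0,T)\times\mathbb{R}\to\mathbb{R}$ with $\eta(t,x+1)=\eta(t,x)+1$, $\partial_t\eta(t,x)=u(t,\eta(t,x))$, $\eta(0,x)=x$. Then $u$ is a solution of the $\mu$B equation $$u_{txx}+3u_xu_{xx}+uu_{xxx}=0$$ if and only if the horizontal component of the acceleration of $\eta$ vanishes, i.e. $$P_\eta\nabla_{\dot\eta}\dot\eta=\partial_t^2\eta(t,x)-\int_0^1\partial_t^2\eta(t,y)\,dy=0\quad\text{for all }t,x.$$ Moreover, if $u$ is such a solution with $u(0,\cdot)=u_0$, then $\eta(t,x)=x+t\big(u_0(x)-u_0(0)\big)+\eta(t,0)$ for all $x\in[0,1]$ and all sufficiently small $t\ge0$.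
   Context: $S^1=\mathbb{R}/\mathbb{Z}\simeq[0,1)$. On the group of circle diffeomorphisms equipped with the $L^2$ metric $\langle V,W\rangle=\int_0^1V(x)W(x)\,dx$ on each tangent space, the Levi-Civita covariant derivative along a curve $\eta(t)$ satisfies $\nabla_{\dot\eta}\dot\eta=\ddot\eta=\partial_t^2\eta$, and the horizontal projection for the Riemannian submersion onto the quotient by rotations is $P_\eta(W)=W-\int_0^1W(x)\,dx$. *)

From Stdlib Require Import Reals List.
From Coquelicot Require Import Coquelicot.
Open Scope R_scope.

Definition pt (f : R -> R -> R) : R -> R -> R :=
  fun t x => Derive (fun s => f s x) t.
Definition px (f : R -> R -> R) : R -> R -> R :=
  fun t x => Derive (fun y => f t y) x.

(* Iterated partial derivative: true = d/dt, false = d/dx;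
   the head of the list is applied last. *)
Fixpoint iter_partial (l : list bool) (f : R -> R -> R) : R -> R -> R :=
  match l with
  | nil => f
  | b :: l' => if b then pt (iter_partial l' f) else px (iter_partial l' f)
  end.

Definition smooth_on (D : R -> R -> Prop) (f : R -> R -> R) : Prop :=
  forall l : list bool, forall t x, D t x ->
    ex_derive (fun s => iter_partial l f s x) t /\
    ex_derive (fun y => iter_partial l f t y) x /\
    continuous (fun p : R * R => iter_partial l f (fst p) (snd p)) (t, x).

Definition muB_lhs (u : R -> R -> R) (t x : R) : R :=
  px (px (pt u)) t x + 3 * px u t x * px (px u) t x + u t x * px (px (px u)) t x.

Definition horiz_accel (eta : R -> R -> R) (t x : R) : R :=
  pt (pt eta) t x - RInt (fun y => pt (pt eta) t y) 0 1.

From Stdlib Require Import Reals Lra List.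
From Coquelicot Require Import Coquelicot.
Open Scope R_scope.

(* Along a particle path, [d/dt u(t, eta t x) = (u_t + u u_x)(t, eta t x)], so the acceleration of
   [eta] is the material acceleration [a = u_t + u u_x] read along the flow, and [d_x^2 a] is exactly
   the muB expression.  A periodic function with vanishing second derivative is constant, so muB holds
   at time [t] iff [a t] is constant.  Vanishing horizontal acceleration says that [a t] is constant on
   the image of [eta t]; integrating twice in time then gives the explicit formula for the flow, which
   shows that [eta t] covers the whole circle, so [a t] is constant. *)

Lemma locally_open_interval (lo hi t : R) :
  lo < t < hi -> locally t (fun s => lo < s < hi).
Proof. exact (open_and _ _ (open_gt lo) (open_lt hi) t). Qed.

Lemma locally_2d_open_strip (lo hi t x : R) :
  lo < t < hi -> locally_2d (fun s _ => lo < s < hi) t x.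
Proof.
  intros Ht; destruct (locally_open_interval lo hi t Ht) as [d Hd].
  exists d; intros s y Hs _; exact (Hd s Hs).
Qed.

Lemma differentiable_pt_lim_of_ex_diff_2 (f : R -> R -> R) (t x : R) :
  locally_2d (fun s y => ex_diff_n f 2 s y) t x ->
  differentiable_pt_lim f t x (pt f t x) (px f t x).
Proof.
  intros Hf; destruct (Taylor_Lagrange_2d f 1 t x Hf) as [D [d HD]].
  intros eps.
  set (r := Rmin d (eps / (Rabs D + 1))).
  assert (Hr : 0 < r).
  { apply Rmin_pos; [apply cond_pos|].
    apply Rdiv_lt_0_compat; [apply cond_pos | pose proof (Rabs_pos D); lra]. }
  exists (mkposreal r Hr); simpl; intros s y Hs Hy.
  assert (Hrd : r <= d) by apply Rmin_l.
  assert (Hre : r <= eps / (Rabs D + 1)) by apply Rmin_r.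
  specialize (HD s y ltac:(lra) ltac:(lra)).
  replace (DL_pol 1 f t x (s - t) (y - x))
    with (f t x + (pt f t x * (s - t) + px f t x * (y - x))) in HD
    by (unfold DL_pol, differential, partial_derive, pt, px, Binomial.C; simpl; field).
  set (M := Rmax (Rabs (s - t)) (Rabs (y - x))) in *.
  assert (HM : 0 <= M < eps / (Rabs D + 1)).
  { split; [apply (Rle_trans _ _ _ (Rabs_pos _) (Rmax_l _ _))|].
    apply Rmax_lub_lt; lra. }
  assert (HDM : M * (Rabs D + 1) <= eps).
  { pose proof (Rabs_pos D).
    apply (Rle_trans _ (eps / (Rabs D + 1) * (Rabs D + 1))).
    - apply Rmult_le_compat_r; lra.
    - right; field; lra. }
  pose proof (Rle_abs D).
  replace (f s y - f t x - _) with (f s y - (f t x + (pt f t x * (s - t) + px f t x * (y - x))))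
    by ring.
  eapply Rle_trans; [exact HD|]; simpl.
  destruct HM as [HM0 _]; pose proof (Rmult_le_compat_l M _ _ HM0 HDM).
  assert (0 <= M * M) by nra; nra.
Qed.

Lemma smooth_on_ex_diff_2 (D : R -> R -> Prop) (f : R -> R -> R) (t x : R) :
  smooth_on D f -> D t x -> ex_diff_n f 2 t x.
Proof.
  intros Hf Hx.
  pose proof (fun l => Hf l t x Hx) as Hl.
  destruct (Hl nil) as [Ht0 [Hx0 Hc0]].
  destruct (Hl (true :: nil)) as [Ht1 [Hx1 Hc1]].
  destruct (Hl (false :: nil)) as [Ht2 [Hx2 Hc2]].
  destruct (Hl (true :: true :: nil)) as [_ [_ Hc11]].
  destruct (Hl (false :: true :: nil)) as [_ [_ Hc21]].
  destruct (Hl (true :: false :: nil)) as [_ [_ Hc12]].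
  destruct (Hl (false :: false :: nil)) as [_ [_ Hc22]].
  simpl in *; repeat split; try apply continuity_2d_pt_filterlim; assumption.
Qed.

Lemma smooth_on_differentiable (D : R -> R -> Prop) (f : R -> R -> R) (t x : R) :
  smooth_on D f -> locally_2d D t x ->
  differentiable_pt_lim f t x (pt f t x) (px f t x).
Proof.
  intros Hf HD; apply differentiable_pt_lim_of_ex_diff_2.
  destruct HD as [d Hd]; exists d; intros s y Hs Hy.
  exact (smooth_on_ex_diff_2 D f s y Hf (Hd s y Hs Hy)).
Qed.

Lemma is_derive_comp_2d (f : R -> R -> R) (g : R -> R) (s dg lt lx : R) :
  differentiable_pt_lim f s (g s) lt lx -> is_derive g s dg ->
  is_derive (fun r => f r (g r)) s (lt + lx * dg).
Proof.
  intros Hf Hg; apply is_derive_Reals.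
  rewrite <- (Rmult_1_r lt) at 1.
  apply (derivable_pt_lim_comp_2d f (fun r => r) g s); [exact Hf | apply derivable_pt_lim_id |].
  now apply is_derive_Reals.
Qed.

Lemma is_derive_Rminus (f g : R -> R) (x df dg : R) :
  is_derive f x df -> is_derive g x dg -> is_derive (fun y => f y - g y) x (df - dg).
Proof. exact (is_derive_minus f g x df dg). Qed.

Lemma is_derive_0_eq_on (f : R -> R) (lo hi : R) :
  (forall y, lo < y < hi -> is_derive f y 0) ->
  forall y z, lo < y < hi -> lo < z < hi -> f y = f z.
Proof.
  intros Hf y z Hy Hz.
  assert (Hin : forall r, Rmin y z <= r <= Rmax y z -> lo < r < hi).
  { intros r; destruct (Rle_dec y z);
      [rewrite Rmin_left, Rmax_right | rewrite Rmin_right, Rmax_left]; lra. }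
  destruct (MVT_gen f y z (fun _ => 0)) as [c [_ Hc]].
  - intros r Hr; apply Hf, Hin; lra.
  - intros r Hr; apply continuity_pt_filterlim.
    apply (ex_derive_continuous (K := R_AbsRing) (V := R_NormedModule)).
    exists 0; apply Hf, Hin, Hr.
  - lra.
Qed.

Lemma is_derive_0_eq (f : R -> R) :
  (forall y, is_derive f y 0) -> forall y z, f y = f z.
Proof.
  intros Hf y z; apply (is_derive_0_eq_on f (Rmin y z - 1) (Rmax y z + 1)); [intros; apply Hf|..];
    pose proof (Rmin_l y z); pose proof (Rmin_r y z);
    pose proof (Rmax_l y z); pose proof (Rmax_r y z); lra.
Qed.

Lemma right_limit_of_eventually_eq (g : R -> R) (c l T : R) : 0 < T ->
  (forall s, 0 < s < T -> g s = c) -> filterlim g (at_right 0) (locally l) -> l = c.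
Proof.
  intros HT Hg Hl.
  apply (filterlim_locally_unique (F := at_right 0) g l c Hl).
  apply (filterlim_ext_loc (fun _ => c)); [| apply filterlim_const].
  exists (mkposreal T HT); intros s Hs Hs0.
  change (Rabs (s - 0) < T) in Hs; apply Rabs_def2 in Hs.
  symmetry; apply Hg; lra.
Qed.

Lemma is_derive_0_right_limit (g : R -> R) (l T : R) : 0 < T ->
  (forall s, 0 < s < T -> is_derive g s 0) -> filterlim g (at_right 0) (locally l) ->
  forall s, 0 < s < T -> g s = l.
Proof.
  intros HT Hg Hl s Hs.
  assert (Hconst : forall r, 0 < r < T -> g r = g (T / 2))
    by (intros r Hr; apply (is_derive_0_eq_on g 0 T); [exact Hg | exact Hr | lra]).
  rewrite (Hconst s Hs); symmetry.
  exact (right_limit_of_eventually_eq g (g (T / 2)) l T HT Hconst Hl).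
Qed.

Lemma filterlim_continuity_2d_pt (F : (R -> Prop) -> Prop) {FF : Filter F}
  (f : R -> R -> R) (g h : R -> R) (a b : R) :
  continuity_2d_pt f a b -> filterlim g F (locally a) -> filterlim h F (locally b) ->
  filterlim (fun s => f (g s) (h s)) F (locally (f a b)).
Proof.
  intros Hf Hg Hh; apply filterlim_locally; intros eps.
  destruct (Hf eps) as [d Hd].
  generalize (filter_and _ _ (proj1 (filterlim_locally g a) Hg d)
                             (proj1 (filterlim_locally h b) Hh d)).
  apply filter_imp; intros s [Hgs Hhs]; exact (Hd _ _ Hgs Hhs).
Qed.

Lemma filterlim_Rminus (F : (R -> Prop) -> Prop) {FF : Filter F} (f g : R -> R) (a b : R) :
  filterlim f F (locally a) -> filterlim g F (locally b) ->
  filterlim (fun s => f s - g s) F (locally (a - b)).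
Proof.
  apply (filterlim_continuity_2d_pt F (fun p q => p - q)).
  apply continuity_2d_pt_minus; [apply continuity_2d_pt_id1 | apply continuity_2d_pt_id2].
Qed.

Lemma ex_derive_right_limit (f : R -> R) (x : R) :
  ex_derive f x -> filterlim f (at_right x) (locally (f x)).
Proof.
  intros Hf; apply (filterlim_filter_le_1 (F := locally x)); [apply filter_le_within |].
  exact (ex_derive_continuous (K := R_AbsRing) (V := R_NormedModule) f x Hf).
Qed.

Lemma periodic_IZR (f : R -> R) :
  (forall y, f (y + 1) = f y) -> forall k y, f (y + IZR k) = f y.
Proof.
  intros Hf k; induction k using Z.peano_ind; intros y.
  - now rewrite Rplus_0_r.
  - rewrite succ_IZR, <- Rplus_assoc, Hf; apply IHk.
  - rewrite <- Z.sub_1_r, minus_IZR.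
    replace (y + (IZR k - 1)) with ((y - 1) + IZR k) by ring.
    rewrite IHk, <- (Hf (y - 1)); f_equal; ring.
Qed.

Lemma Derive_periodic (f : R -> R) (y : R) :
  (forall z, f (z + 1) = f z) -> Derive f (y + 1) = Derive f y.
Proof.
  intros Hf; unfold Derive; f_equal; apply Lim_ext; intros h.
  now replace (y + 1 + h) with (y + h + 1) by ring; rewrite !Hf.
Qed.

Lemma continuous_lift_surjective_mod1 (phi : R -> R) :
  continuity phi -> phi 1 = phi 0 + 1 -> forall z, exists y k, z = phi y + IZR k.
Proof.
  intros Hphi Hphi1 z.
  destruct (base_Int_part (z - phi 0)) as [Hk1 Hk2].
  set (k := Int_part (z - phi 0)) in *.
  destruct (IVT_gen phi 0 1 (z - IZR k) Hphi) as [y [_ Hy]].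
  { rewrite Hphi1, Rmin_left, Rmax_right; lra. }
  exists y, k; lra.
Qed.

(* A 1-periodic [f] with [f'' = 0] is affine, hence constant. *)
Lemma periodic_second_derivative_0_iff_const (f f1 f2 : R -> R) :
  (forall y, f (y + 1) = f y) ->
  (forall y, is_derive f y (f1 y)) -> (forall y, is_derive f1 y (f2 y)) ->
  (forall y, f2 y = 0) <-> (forall y, f y = f 0).
Proof.
  intros Hper Hf Hf1; split.
  - intros Hf2.
    assert (Hslope : forall y, f1 y = f1 0)
      by (intros y; apply is_derive_0_eq; intros z; rewrite <- (Hf2 z); apply Hf1).
    assert (Haffine : forall y, f y - f1 0 * y = f 0 - f1 0 * 0).
    { intros y; apply (is_derive_0_eq (fun z => f z - f1 0 * z)); intros z.
      assert (Hlin : is_derive (fun z => f1 0 * z) z (f1 0)) by (auto_derive; [exact I | ring]).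
      pose proof (is_derive_Rminus _ _ _ _ _ (Hf z) Hlin) as Hd.
      now rewrite (Hslope z), Rminus_diag in Hd. }
    assert (Hslope0 : f1 0 = 0).
    { pose proof (Haffine 1) as H1; rewrite <- (Rplus_0_l 1), Hper in H1; lra. }
    intros y; pose proof (Haffine y) as Hy; rewrite Hslope0 in Hy; lra.
  - intros Hconst.
    assert (Hslope : forall y, f1 y = 0).
    { intros y; apply (is_derive_unique f y (f1 y)) in Hf as Hd; rewrite <- Hd.
      rewrite (Derive_ext _ (fun _ => f 0) _ Hconst); apply Derive_const. }
    intros y; apply (is_derive_unique f1 y (f2 y)) in Hf1 as Hd; rewrite <- Hd.
    rewrite (Derive_ext _ (fun _ => 0) _ Hslope); apply Derive_const.
Qed.

Definition material_accel (u : R -> R -> R) (t y : R) : R := pt u t y + px u t y * u t y.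

Definition material_accel_dx (u : R -> R -> R) (t y : R) : R :=
  px (pt u) t y + px (px u) t y * u t y + px u t y * px u t y.

Section SmoothVelocity.

Variables (T e : R) (u : R -> R -> R).
Hypothesis He : 0 < e.
Hypothesis hu_smooth : smooth_on (fun t x => - e < t < T) u.

Lemma ex_derive_t_partial (l : list bool) (t y : R) :
  0 <= t < T -> ex_derive (fun s => iter_partial l u s y) t.
Proof. intros Ht; apply (hu_smooth l t y); lra. Qed.

Lemma ex_derive_x_partial (l : list bool) (t y : R) :
  0 <= t < T -> ex_derive (fun z => iter_partial l u t z) y.
Proof. intros Ht; apply (hu_smooth l t y); lra. Qed.

Lemma u_differentiable (t y : R) :
  0 <= t < T -> differentiable_pt_lim u t y (pt u t y) (px u t y).
Proof.
  intros Ht; apply (smooth_on_differentiable _ u t y hu_smooth).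
  apply locally_2d_open_strip; lra.
Qed.

Lemma is_derive_material_accel (t y : R) :
  0 <= t < T -> is_derive (material_accel u t) y (material_accel_dx u t y).
Proof.
  intros Ht; unfold material_accel, material_accel_dx; auto_derive.
  - repeat split; [apply (ex_derive_x_partial (true :: nil)) | apply (ex_derive_x_partial (false :: nil))
                  | apply (ex_derive_x_partial nil)]; exact Ht.
  - unfold px; ring.
Qed.

Lemma is_derive_material_accel_dx (t y : R) :
  0 <= t < T -> is_derive (material_accel_dx u t) y (muB_lhs u t y).
Proof.
  intros Ht; unfold material_accel_dx, muB_lhs; auto_derive.
  - repeat split; [apply (ex_derive_x_partial (false :: true :: nil))
                  | apply (ex_derive_x_partial (false :: false :: nil)) | apply (ex_derive_x_partial nil)
                  | apply (ex_derive_x_partial (false :: nil)) | apply (ex_derive_x_partial (false :: nil))];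
      exact Ht.
  - unfold px; ring.
Qed.

Lemma muB_lhs_right_continuous (x : R) :
  0 < T -> filterlim (fun s => muB_lhs u s x) (at_right 0) (locally (muB_lhs u 0 x)).
Proof.
  intros HT; apply (ex_derive_right_limit (fun s => muB_lhs u s x) 0); unfold muB_lhs; auto_derive.
  repeat split; [apply (ex_derive_t_partial (false :: false :: true :: nil))
                | apply (ex_derive_t_partial (false :: nil)) | apply (ex_derive_t_partial (false :: false :: nil))
                | apply (ex_derive_t_partial nil) | apply (ex_derive_t_partial (false :: false :: false :: nil))];
    lra.
Qed.


Hypothesis hu_per : forall t x, 0 <= t < T -> u t (x + 1) = u t x.

Lemma material_accel_periodic (t y : R) :
  0 < t < T -> material_accel u t (y + 1) = material_accel u t y.
Proof.
  intros Ht; unfold material_accel, px.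
  rewrite Derive_periodic by (intros z; apply hu_per; lra).
  rewrite hu_per by lra; apply Rplus_eq_compat_r; unfold pt.
  apply Derive_ext_loc, (filter_imp (fun s => 0 < s < T)); [| now apply locally_open_interval].
  intros s Hs; apply hu_per; lra.
Qed.

Lemma muB_lhs_0_iff_material_accel_const (t : R) :
  0 < t < T ->
  (forall y, muB_lhs u t y = 0) <-> (forall y, material_accel u t y = material_accel u t 0).
Proof.
  intros Ht; apply (periodic_second_derivative_0_iff_const _ (material_accel_dx u t)).
  - intros y; now apply material_accel_periodic.
  - intros y; apply is_derive_material_accel; lra.
  - intros y; apply is_derive_material_accel_dx; lra.
Qed.

Lemma muB_lhs_0_at_0 :
  0 < T -> (forall t x, 0 < t < T -> muB_lhs u t x = 0) ->
  forall t x, 0 <= t < T -> muB_lhs u t x = 0.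
Proof.
  intros HT Hmu t x Ht; destruct (Req_dec t 0) as [-> | Ht0]; [| apply Hmu; lra].
  exact (right_limit_of_eventually_eq _ 0 _ T HT (fun s Hs => Hmu s x Hs)
           (muB_lhs_right_continuous x HT)).
Qed.

End SmoothVelocity.

Section Flow.

Variables (T e : R) (u eta : R -> R -> R).
Hypothesis HT : 0 < T.
Hypothesis He : 0 < e.
Hypothesis hu_smooth : smooth_on (fun t x => - e < t < T) u.
Hypothesis hu_per : forall t x, 0 <= t < T -> u t (x + 1) = u t x.
Hypothesis heta_per : forall t x, 0 <= t < T -> eta t (x + 1) = eta t x + 1.
Hypothesis heta0 : forall x, eta 0 x = x.
Hypothesis heta_cont0 :
  forall x, filterlim (fun s => eta s x) (at_right 0) (locally (eta 0 x)).
Hypothesis heta_ode :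
  forall t x, 0 < t < T -> is_derive (fun s => eta s x) t (u t (eta t x)).

Lemma is_derive_u_along_flow (t x : R) :
  0 < t < T -> is_derive (fun s => u s (eta s x)) t (material_accel u t (eta t x)).
Proof.
  intros Ht; apply is_derive_comp_2d; [| now apply heta_ode].
  apply (u_differentiable T e); [exact He | exact hu_smooth | lra].
Qed.

Lemma flow_accel (t x : R) :
  0 < t < T -> pt (pt eta) t x = material_accel u t (eta t x).
Proof.
  intros Ht; unfold pt at 1.
  rewrite (Derive_ext_loc _ (fun s => u s (eta s x))).
  - now apply is_derive_unique, is_derive_u_along_flow.
  - apply (filter_imp (fun s => 0 < s < T)); [| now apply locally_open_interval].
    intros s Hs; apply is_derive_unique, heta_ode, Hs.
Qed.

Lemma horiz_accel_along_flow (t x : R) :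
  0 < t < T -> horiz_accel eta t x
  = material_accel u t (eta t x) - RInt (fun y => material_accel u t (eta t y)) 0 1.
Proof.
  intros Ht; unfold horiz_accel; rewrite flow_accel by exact Ht.
  f_equal; apply RInt_ext; intros y _; now apply flow_accel.
Qed.

Lemma u_along_flow_right_limit (x : R) :
  filterlim (fun s => u s (eta s x)) (at_right 0) (locally (u 0 x)).
Proof.
  replace (u 0 x) with (u 0 (eta 0 x)) by now rewrite heta0.
  apply (filterlim_continuity_2d_pt _ u (fun s => s)); [| | apply heta_cont0].
  - destruct (hu_smooth nil 0 (eta 0 x)) as [_ [_ Hc]]; [lra |].
    now apply continuity_2d_pt_filterlim.
  - apply (filterlim_filter_le_1 (F := locally 0)); [apply filter_le_within | apply filterlim_id].
Qed.

Lemma flow_formula :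
  (forall s x, 0 < s < T -> material_accel u s (eta s x) = material_accel u s (eta s 0)) ->
  forall t x, 0 <= t < T -> eta t x = x + t * (u 0 x - u 0 0) + eta t 0.
Proof.
  intros Hc t x Ht; set (b := u 0 x - u 0 0).
  (* the relative velocity of the particles started at [x] and [0] is conserved *)
  assert (Hvel : forall s, 0 < s < T -> u s (eta s x) - u s (eta s 0) = b).
  { apply (is_derive_0_right_limit _ _ T HT).
    - intros s Hs.
      pose proof (is_derive_Rminus _ _ _ _ _ (is_derive_u_along_flow s x Hs)
                    (is_derive_u_along_flow s 0 Hs)) as Hd.
      now rewrite Hc, Rminus_diag in Hd.
    - exact (filterlim_Rminus _ _ _ _ _ (u_along_flow_right_limit x) (u_along_flow_right_limit 0)). }
  assert (Hgap : forall s, 0 < s < T -> eta s x - eta s 0 - b * s = x).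
  { apply (is_derive_0_right_limit _ _ T HT).
    - intros s Hs.
      assert (Hlin : is_derive (fun r => b * r) s b) by (auto_derive; [exact I | ring]).
      pose proof (is_derive_Rminus _ _ _ _ _
                    (is_derive_Rminus _ _ _ _ _ (heta_ode s x Hs) (heta_ode s 0 Hs)) Hlin) as Hd.
      now rewrite (Hvel s Hs), Rminus_diag in Hd.
    - assert (Hlin : ex_derive (fun r => b * r) 0) by (auto_derive; exact I).
      pose proof (filterlim_Rminus _ _ _ _ _
                    (filterlim_Rminus _ _ _ _ _ (heta_cont0 x) (heta_cont0 0))
                    (ex_derive_right_limit _ _ Hlin)) as Hlim.
      now rewrite !heta0, Rmult_0_r, !Rminus_0_r in Hlim. }
  destruct (Req_dec t 0) as [-> | Ht0]; [rewrite !heta0; ring |].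
  pose proof (Hgap t ltac:(lra)); lra.
Qed.


(* By the flow formula [eta t] is a continuous lift of a degree-one circle map, so every point of the
   circle is of the form [eta t y]; periodicity of [material_accel] then spreads the constant value. *)
Lemma material_accel_const_of_along_flow :
  (forall s x, 0 < s < T -> material_accel u s (eta s x) = material_accel u s (eta s 0)) ->
  forall t z, 0 < t < T -> material_accel u t z = material_accel u t 0.
Proof.
  intros Hc t z Ht.
  set (phi := fun y => y + t * (u 0 y - u 0 0) + eta t 0).
  assert (Hphi : forall y, eta t y = phi y) by (intros y; apply flow_formula; [exact Hc | lra]).
  assert (Hcont : continuity phi).
  { intros y; apply continuity_pt_filterlim.
    apply (ex_derive_continuous (K := R_AbsRing) (V := R_NormedModule)).
    unfold phi; auto_derive; apply (ex_derive_x_partial T e u He hu_smooth nil); lra. }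
  assert (Hdeg : phi 1 = phi 0 + 1).
  { rewrite <- !Hphi, <- heta_per by lra; now rewrite Rplus_0_l. }
  assert (Hall : forall w, material_accel u t w = material_accel u t (eta t 0)).
  { intros w; destruct (continuous_lift_surjective_mod1 phi Hcont Hdeg w) as [y [k ->]].
    rewrite periodic_IZR, <- Hphi; [now apply Hc |].
    intros v; apply (material_accel_periodic T u hu_per); exact Ht. }
  now rewrite !Hall.
Qed.

End Flow.

Theorem theorem7p1 (T : R) (u eta : R -> R -> R)
  (hT : 0 < T)
  (hu_smooth : exists eps, 0 < eps /\ smooth_on (fun t x => - eps < t < T) u)
  (hu_per : forall t x, 0 <= t < T -> u t (x + 1) = u t x)
  (heta_per : forall t x, 0 <= t < T -> eta t (x + 1) = eta t x + 1)
  (heta0 : forall x, eta 0 x = x)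
  (heta_cont0 : forall x, filterlim (fun s => eta s x) (at_right 0) (locally (eta 0 x)))
  (heta_ode : forall t x, 0 < t < T -> is_derive (fun s => eta s x) t (u t (eta t x))) :
  ((forall t x, 0 <= t < T -> muB_lhs u t x = 0) <->
   (forall t x, 0 < t < T -> horiz_accel eta t x = 0)) /\
  ((forall t x, 0 <= t < T -> muB_lhs u t x = 0) ->
   exists delta, 0 < delta /\ delta <= T /\
     forall t x, 0 <= t < delta -> 0 <= x <= 1 ->
       eta t x = x + t * (u 0 x - u 0 0) + eta t 0).
Proof.
  destruct hu_smooth as [e [He Hsmooth]].
  pose proof (horiz_accel_along_flow _ _ _ _ He Hsmooth heta_ode) as Hhoriz.
  assert (Hconst : (forall t x, 0 <= t < T -> muB_lhs u t x = 0) ->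
                   forall t z, 0 < t < T -> material_accel u t z = material_accel u t 0).
  { intros Hmu t z Ht.
    apply (muB_lhs_0_iff_material_accel_const _ _ _ He Hsmooth hu_per t Ht); intros y; apply Hmu; lra. }
  split; [split |].
  - intros Hmu t x Ht.
    rewrite Hhoriz by exact Ht.
    rewrite (RInt_ext _ (fun _ => material_accel u t 0)) by (intros y _; now apply Hconst).
    rewrite RInt_const, (Hconst Hmu t _ Ht).
    unfold scal; simpl; unfold mult; simpl; ring.
  - intros Hh.
    assert (Halong : forall s x, 0 < s < T ->
              material_accel u s (eta s x) = material_accel u s (eta s 0)).
    { intros s x Hs; pose proof (Hh s x Hs); pose proof (Hh s 0 Hs).
      rewrite Hhoriz in * by exact Hs; lra. }
    apply (muB_lhs_0_at_0 _ _ _ He Hsmooth hT); intros t x Ht.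
    apply (muB_lhs_0_iff_material_accel_const _ _ _ He Hsmooth hu_per t Ht); intros y.
    exact (material_accel_const_of_along_flow _ _ _ _ hT He Hsmooth hu_per heta_per heta0 heta_cont0
             heta_ode Halong t y Ht).
  - intros Hmu; exists T; split; [exact hT | split; [lra |]].
    intros t x Ht _; apply (flow_formula _ _ _ _ hT He Hsmooth heta0 heta_cont0 heta_ode); [| exact Ht].
    intros s y Hs; now rewrite (Hconst Hmu s (eta s y) Hs), (Hconst Hmu s (eta s 0) Hs).
Qed.
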